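(* Let $k$ be an odd positive integer and let $\zeta$ be a primitive $2k$-th root of unity. Let $Q_k$ denote the set of quasipolarities of $\mathbb{Z}/2k\mathbb{Z}$. Then \[ \sum_{\pi\in Q_{k}}\prod_{j=0}^{2k-1}\frac{1+\zeta^{j-\pi(j)}}{1-\zeta^{j-\pi(j)}} = 0. \]
   Context: The affine general linear group $\overrightarrow{GL}(\mathbb{Z}/2k\mathbb{Z})$ consists of the maps $e^{u}.v:\mathbb{Z}/2k\mathbb{Z}\to\mathbb{Z}/2k\mathbb{Z}$, $x\mapsto vx+u$, with $u\in\mathbb{Z}/2k\mathbb{Z}$ and $v\in(\mathbb{Z}/2k\mathbb{Z})^{\times}$. A quasipolarity is an element $\pi$ of this group that is an involution ($\pi\circ\pi=\mathrm{id}$) and a derangement ($\pi(x)\neq x$ for all $x$). Elements $j\in\{0,\dots,2k-1\}$ are identified with residues mod $2k$; the exponent $j-\pi(j)$ is taken mod $2k$ (well defined since $\zeta^{2k}=1$), and denominators are nonzero because $\pi$ is a derangement. *)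

From mathcomp Require Import all_boot all_order all_algebra all_field.
Set Implicit Arguments. Unset Strict Implicit. Unset Printing Implicit Defensive.
Import GRing.Theory.
Local Open Scope ring_scope.

Definition affine_GL (n : nat) (f : {ffun 'Z_n -> 'Z_n}) : bool :=
  [exists u : 'Z_n, exists v : 'Z_n,
     (v \is a GRing.unit) && [forall x : 'Z_n, f x == v * x + u]].

Definition quasipolarity (n : nat) (f : {ffun 'Z_n -> 'Z_n}) : bool :=
  [&& affine_GL f, [forall x : 'Z_n, f (f x) == x] & [forall x : 'Z_n, f x != x]].

Definition Qset (n : nat) : {set {ffun 'Z_n -> 'Z_n}} := [set f | quasipolarity f].

From mathcomp Require Import all_boot all_order all_algebra all_field.
From mathcomp Require Import zify.

Set Implicit Arguments.
Unset Strict Implicit.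
Unset Printing Implicit Defensive.

Import GRing.Theory.
Local Open Scope ring_scope.

(* Every quasipolarity x |-> v x + u of Z/2kZ moves some point j by exactly k,
   so the factor of index j has numerator 1 + zeta^k = 0 and every summand
   vanishes.  Such a j is a "half" of u or of u + k (whichever is even, k being
   odd), chosen in the kernel of v + 1: the involution law at 0 gives
   (v + 1) u = 0, and v + 1 is even because the unit v is odd.  The half of u
   itself is excluded, since it would be a fixed point. *)

Lemma prim_root_half_opp (R : idomainType) (k : nat) (z : R) :
  (0 < k)%N -> (2 * k).-primitive_root z -> z ^+ k = -1.
Proof.
move=> k_gt0 hz.
have : (z ^+ k) ^+ 2 == 1 by rewrite -exprM mulnC (prim_expr_order hz).
rewrite sqrf_eq1 => /orP[|/eqP //].
rewrite -(expr0 z) (eq_prim_root_expr hz) mod0n modn_small; last by lia.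
by rewrite eqn0Ngt k_gt0.
Qed.

Lemma double_half_add_odd_mul (k m : nat) :
  odd k -> (2 * (m + odd m * k)./2 = m + odd m * k)%N.
Proof.
move=> k_odd; rewrite -[RHS]odd_double_half oddD oddM oddb k_odd andbT addbb.
by rewrite add0n mul2n.
Qed.

Lemma dvdn_mul_half (k w m : nat) : odd k -> (2 %| w)%N ->
  (2 * k %| w * m)%N -> (2 * k %| w * ((m + odd m * k)./2))%N.
Proof.
move=> k_odd w_even dvd_wm.
rewrite Gauss_dvd ?coprime2n // dvdn_mulr //=.
rewrite -(@Gauss_dvdr _ 2) ?coprimen2 // mulnCA double_half_add_odd_mul // mulnDr.
apply: dvdn_add; first exact: dvdn_trans (dvdn_mull 2 (dvdnn k)) dvd_wm.
by rewrite mulnA dvdn_mull.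
Qed.

Lemma Zp_nat_eq0 (p m : nat) : (1 < p)%N -> ((m%:R : 'Z_p) == 0) = (p %| m)%N.
Proof. by move=> p_gt1; rewrite -val_eqE /= val_Zp_nat. Qed.

Lemma val_Zp_half_modulus (k : nat) :
  (0 < k)%N -> ((k%:R : 'Z_(2 * k)) : nat) = k.
Proof. by move=> k_gt0; rewrite val_Zp_nat ?modn_small //; lia. Qed.

Lemma Zp_unit_odd (k : nat) (v : 'Z_(2 * k)) :
  (0 < k)%N -> v \is a GRing.unit -> odd v.
Proof.
move=> k_gt0; rewrite -coprime2n -{1}[v]natr_Zp unitZpE; last by lia.
exact: coprime_dvdl (dvdn_mulr k (dvdnn 2)).
Qed.

Section DoubleOddModulus.

Variable k : nat.
Hypothesis k_odd : odd k.
Local Notation n := (2 * k)%N.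

Let k_gt0 : (0 < k)%N := odd_gt0 k_odd.
Let n_gt1 : (1 < n)%N. Proof. lia. Qed.

Lemma Zp_half_in_kernel (u v : 'Z_n) :
  v \is a GRing.unit -> (v + 1) * u = 0 ->
  exists j : 'Z_n, (v + 1) * j = 0 /\ (j + j = u \/ j + j = u + k%:R).
Proof.
move=> v_unit kill_u.
have vS_even : (2 %| v + 1)%N by rewrite dvdn2 addn1 /= Zp_unit_odd.
have vE : v + 1 = (v + 1)%N%:R by rewrite natrD natr_Zp.
have dvd_vSu : (n %| (v + 1) * u)%N.
  by rewrite -(Zp_nat_eq0 _ n_gt1) natrM -vE natr_Zp kill_u.
exists ((u + odd u * k)./2)%:R; split.
  by apply/eqP; rewrite vE -natrM Zp_nat_eq0 ?dvdn_mul_half.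
rewrite -natrD addnn -mul2n double_half_add_odd_mul //.
by case: (odd u); rewrite ?mul1n ?mul0n ?addn0 ?natrD natr_Zp; [right | left].
Qed.

Lemma quasipolarity_half_turn (p : {ffun 'Z_n -> 'Z_n}) :
  quasipolarity p -> exists j : 'Z_n, j - p j = k%:R.
Proof.
case/and3P=> /existsP[u /existsP[v /andP[v_unit /forallP pE]]].
move=> /forallP p_invol /forallP p_derange.
have {}pE x : p x = v * x + u by apply/eqP.
have kill_u : (v + 1) * u = 0.
  by have := eqP (p_invol 0); rewrite !pE mulr0 add0r mulrDl mul1r.
have [j [kill_j half_j]] := Zp_half_in_kernel v_unit kill_u.
have pjE : p j = - j + u.
  rewrite pE; congr (_ + _).
  by apply/eqP; rewrite -addr_eq0 -{2}[j]mul1r -mulrDl kill_j.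
case: half_j => [half_u | half_uk].
- by have := p_derange j; rewrite pjE -half_u addKr eqxx.
- by exists j; rewrite pjE opprD opprK addrA half_uk addrAC subrr add0r.
Qed.

End DoubleOddModulus.

Theorem theorem2p1 (k : nat) (hk : odd k) (z : algC)
  (hz : (2 * k)%N.-primitive_root z) :
  \sum_(p in Qset (2 * k))
     \prod_(j : 'Z_(2 * k))
        ((1 + z ^+ (nat_of_ord (j - p j))) / (1 - z ^+ (nat_of_ord (j - p j))))
  = 0.
Proof.
have zk : z ^+ k = -1 := prim_root_half_opp (odd_gt0 hk) hz.
apply: big1 => p; rewrite inE => /(quasipolarity_half_turn hk)[j jE].
apply/eqP/prodf_eq0; exists j => //.
by rewrite jE val_Zp_half_modulus ?odd_gt0 // zk subrr mul0r.
Qed.
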